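(* For $0<A<1$ and $m>0$ let $K_m(A)=-e^{i\pi A}+e^{-i\pi A}e^{4\pi m i/3}-e^{i\pi A}e^{4\pi m i/3}$. Let $A_0,B_0\in(0,1)$ with $A_0+B_0=1$. Then there exist $\delta>0$ and differentiable real functions $\Theta_1(A,B),\Theta_2(A,B)$ defined on $\{|A-A_0|+|B-B_0|<\delta\}$ with $\Theta_1(A_0,B_0)=1$, $\Theta_2(A_0,B_0)=2$ and $$K_{\Theta_2(A,B)}(A)+K_{\Theta_1(A,B)}(B)=0$$ (so that $(A,B,\Theta_1(A,B),\Theta_2(A,B))$ belongs to the set $\mathcal K$ below). Moreover $$\lim_{\varepsilon\to0}\frac{\Theta_1(A_0,B_0-\varepsilon)-1}{\varepsilon}=\lim_{\varepsilon\to0}\frac{\Theta_2(A_0,B_0-\varepsilon)-2}{\varepsilon}=-\frac38\Big(1+\sqrt3\cot(\pi A_0)\Big).$$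
   Context: $\mathcal K=\{(A,B,n,m):0<A,B<1,\ n>0,\ m>0,\ \tfrac{2(n+m)}{3}>1,\ K_m(A)+K_n(B)=0\}$. *)

From Stdlib Require Import Reals.
Open Scope R_scope.

Definition C := (R * R)%type.
Definition Cadd (z w : C) : C := (fst z + fst w, snd z + snd w).
Definition Copp (z : C) : C := (- fst z, - snd z).
Definition Cmul (z w : C) : C :=
  (fst z * fst w - snd z * snd w, fst z * snd w + snd z * fst w).
Definition C0 : C := (0, 0).
Definition Cexpi (t : R) : C := (cos t, sin t).

Definition K (m A : R) : C :=
  Cadd (Cadd (Copp (Cexpi (PI * A)))
             (Cmul (Cexpi (- (PI * A))) (Cexpi (4 * PI * m / 3))))
       (Copp (Cmul (Cexpi (PI * A)) (Cexpi (4 * PI * m / 3)))).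

Definition inK (A B n m : R) : Prop :=
  0 < A < 1 /\ 0 < B < 1 /\ 0 < n /\ 0 < m /\ 2 * (n + m) / 3 > 1 /\
  Cadd (K m A) (K n B) = C0.

Definition differentiable2_at (f : R -> R -> R) (x y : R) : Prop :=
  exists a b : R, forall eps : R, 0 < eps -> exists d : R, 0 < d /\
    forall h k : R, Rabs h + Rabs k < d ->
      Rabs (f (x + h) (y + k) - f x y - a * h - b * k) <= eps * (Rabs h + Rabs k).

Definition lim0 (g : R -> R) (L : R) : Prop :=
  forall eps : R, 0 < eps -> exists d : R, 0 < d /\
    forall e : R, 0 < Rabs e < d -> Rabs (g e - L) < eps.

From Coquelicot Require Import Coquelicot.
From Stdlib Require Import Reals Lra.
Open Scope R_scope.

(* Since e^{-i pi A} - e^{i pi A} = -2i sin(pi A), K_m(A) = -e^{i pi A} - 2i sin(pi A) e^{4 pi m i/3},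
   so the equation says that the vectors sin(pi A) e^{4 pi m i/3} and sin(pi B) e^{4 pi n i/3}
   add up to w = i (e^{i pi A} + e^{i pi B}) / 2.  They are found as two sides of the triangle with
   sides |w|, sin(pi A), sin(pi B): the law of cosines gives their angles to w as arccosines, hence
   explicit differentiable solutions.  For A + B = 1 we get w = i sin(pi A), the triangle is
   equilateral and (n, m) = (1, 2); differentiating the explicit formulas in B gives the limits. *)

Lemma differentiable_pt_lim_Rplus x y : differentiable_pt_lim Rplus x y 1 1.
Proof.
  intros eps; exists (mkposreal 1 Rlt_0_1); intros u v _ _.
  replace (u + v - (x + y) - (1 * (u - x) + 1 * (v - y))) with 0 by ring.
  rewrite Rabs_R0; apply Rmult_le_pos; [apply Rlt_le, cond_pos|].
  apply Rle_trans with (Rabs (u - x)); [apply Rabs_pos | apply Rmax_l].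
Qed.

Lemma differentiable_pt_lim_Rmult x y : differentiable_pt_lim Rmult x y y x.
Proof.
  intros eps; exists eps; intros u v Hu Hv.
  replace (u * v - x * y - (y * (u - x) + x * (v - y))) with ((u - x) * (v - y)) by ring.
  rewrite Rabs_mult.
  destruct (Rle_dec (Rabs (u - x)) (Rabs (v - y))).
  - rewrite Rmax_right by lra; apply Rmult_le_compat; try apply Rabs_pos; lra.
  - rewrite Rmax_left, (Rmult_comm (Rabs (u - x))) by lra.
    apply Rmult_le_compat; try apply Rabs_pos; lra.
Qed.

Section DifferentiablePt.

Variables (x y : R).

Lemma differentiable_pt_comp2 (h f g : R -> R -> R) :
  differentiable_pt h (f x y) (g x y) -> differentiable_pt f x y -> differentiable_pt g x y ->
  differentiable_pt (fun u v => h (f u v) (g u v)) x y.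
Proof.
  intros [l1 [l2 Hh]] [a [b Hf]] [c [d Hg]].
  do 2 eexists; apply differentiable_pt_lim_comp; eassumption.
Qed.

Lemma differentiable_pt_comp1 (h : R -> R) (f : R -> R -> R) :
  ex_derive h (f x y) -> differentiable_pt f x y -> differentiable_pt (fun u v => h (f u v)) x y.
Proof.
  intros [l Hh] [a [b Hf]]; apply is_derive_Reals in Hh.
  do 2 eexists.
  apply (differentiable_pt_lim_comp (fun p _ => h p) f f); [|exact Hf|exact Hf].
  exact (differentiable_pt_lim_proj1_0 _ _ _ _ Hh).
Qed.

Lemma differentiable_pt_fst : differentiable_pt (fun u v => u) x y.
Proof.
  do 2 eexists; apply (differentiable_pt_lim_proj1_0 (fun u => u)).
  apply derivable_pt_lim_id.
Qed.

Lemma differentiable_pt_snd : differentiable_pt (fun u v => v) x y.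
Proof.
  exists 0, 1; intros eps; exists (mkposreal 1 Rlt_0_1); intros u v _ _.
  replace (v - y - (0 * (u - x) + 1 * (v - y))) with 0 by ring.
  rewrite Rabs_R0; apply Rmult_le_pos; [apply Rlt_le, cond_pos|].
  apply Rle_trans with (Rabs (v - y)); [apply Rabs_pos | apply Rmax_r].
Qed.

Lemma differentiable_pt_const c : differentiable_pt (fun u v => c) x y.
Proof.
  do 2 eexists; apply (differentiable_pt_lim_proj1_0 (fun u => c)).
  apply derivable_pt_lim_const.
Qed.

Variables f g : R -> R -> R.
Hypotheses (Hf : differentiable_pt f x y) (Hg : differentiable_pt g x y).

Lemma differentiable_pt_plus : differentiable_pt (fun u v => f u v + g u v) x y.
Proof.
  apply (differentiable_pt_comp2 Rplus); auto.
  do 2 eexists; apply differentiable_pt_lim_Rplus.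
Qed.

Lemma differentiable_pt_mult : differentiable_pt (fun u v => f u v * g u v) x y.
Proof.
  apply (differentiable_pt_comp2 Rmult); auto.
  do 2 eexists; apply differentiable_pt_lim_Rmult.
Qed.

Lemma differentiable_pt_minus : differentiable_pt (fun u v => f u v - g u v) x y.
Proof.
  apply (differentiable_pt_comp2 Rplus f (fun u v => - g u v)); auto.
  - do 2 eexists; apply differentiable_pt_lim_Rplus.
  - apply (differentiable_pt_comp1 Ropp); auto; auto_derive; auto.
Qed.

Lemma differentiable_pt_div : g x y <> 0 -> differentiable_pt (fun u v => f u v / g u v) x y.
Proof.
  intros Hg0; apply (differentiable_pt_comp2 Rmult f (fun u v => / g u v)); auto.
  - do 2 eexists; apply differentiable_pt_lim_Rmult.
  - apply (differentiable_pt_comp1 Rinv); auto; auto_derive; auto.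
Qed.

Lemma differentiable_pt_pow n : differentiable_pt (fun u v => f u v ^ n) x y.
Proof. apply (differentiable_pt_comp1 (fun t => t ^ n)); auto; auto_derive; auto. Qed.

Lemma differentiable_pt_sin : differentiable_pt (fun u v => sin (f u v)) x y.
Proof. apply (differentiable_pt_comp1 sin); auto; auto_derive; auto. Qed.

Lemma differentiable_pt_cos : differentiable_pt (fun u v => cos (f u v)) x y.
Proof. apply (differentiable_pt_comp1 cos); auto; auto_derive; auto. Qed.

Lemma differentiable_pt_sqrt : 0 < f x y -> differentiable_pt (fun u v => sqrt (f u v)) x y.
Proof. intros Hf0; apply (differentiable_pt_comp1 sqrt); auto; auto_derive; auto. Qed.

Lemma differentiable_pt_atan : differentiable_pt (fun u v => atan (f u v)) x y.
Proof.
  apply (differentiable_pt_comp1 atan); auto.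
  eexists; apply is_derive_Reals, derivable_pt_lim_atan.
Qed.

Lemma differentiable_pt_acos :
  -1 < f x y < 1 -> differentiable_pt (fun u v => acos (f u v)) x y.
Proof.
  intros Hf1; apply (differentiable_pt_comp1 acos); auto.
  apply ex_derive_Reals_1, derivable_pt_acos, Hf1.
Qed.

End DifferentiablePt.

Lemma differentiable_pt_differentiable2_at f x y :
  differentiable_pt f x y -> differentiable2_at f x y.
Proof.
  intros [a [b Hf]]; exists a, b; intros eps Heps.
  destruct (Hf (mkposreal eps Heps)) as [d Hd]; exists d; split; [apply cond_pos|].
  intros h k Hhk.
  pose proof (Rabs_pos h); pose proof (Rabs_pos k).
  assert (Hh : Rabs (x + h - x) < d) by (replace (x + h - x) with h by ring; lra).
  assert (Hk : Rabs (y + k - y) < d) by (replace (y + k - y) with k by ring; lra).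
  specialize (Hd _ _ Hh Hk); simpl in Hd.
  replace (x + h - x) with h in Hd by ring; replace (y + k - y) with k in Hd by ring.
  replace (f (x + h) (y + k) - f x y - a * h - b * k)
    with (f (x + h) (y + k) - f x y - (a * h + b * k)) by ring.
  eapply Rle_trans; [exact Hd|].
  apply Rmult_le_compat_l; [lra|]; apply Rmax_lub; lra.
Qed.

Ltac differentiable_pt_step :=
  match goal with
  | |- differentiable_pt (fun u v => u) _ _ => apply differentiable_pt_fst
  | |- differentiable_pt (fun u v => v) _ _ => apply differentiable_pt_snd
  | |- differentiable_pt (fun u v => ?c) _ _ => apply differentiable_pt_const
  | |- differentiable_pt (fun u v => @?f u v + @?g u v) _ _ => apply (differentiable_pt_plus _ _ f g)
  | |- differentiable_pt (fun u v => @?f u v - @?g u v) _ _ => apply (differentiable_pt_minus _ _ f g)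
  | |- differentiable_pt (fun u v => @?f u v * @?g u v) _ _ => apply (differentiable_pt_mult _ _ f g)
  | |- differentiable_pt (fun u v => @?f u v / @?g u v) _ _ => apply (differentiable_pt_div _ _ f g)
  | |- differentiable_pt (fun u v => @?f u v ^ ?n) _ _ => apply (differentiable_pt_pow _ _ f)
  | |- differentiable_pt (fun u v => sin (@?f u v)) _ _ => apply (differentiable_pt_sin _ _ f)
  | |- differentiable_pt (fun u v => cos (@?f u v)) _ _ => apply (differentiable_pt_cos _ _ f)
  | |- differentiable_pt (fun u v => sqrt (@?f u v)) _ _ => apply (differentiable_pt_sqrt _ _ f)
  | |- differentiable_pt (fun u v => atan (@?f u v)) _ _ => apply (differentiable_pt_atan _ _ f)
  | |- differentiable_pt (fun u v => acos (@?f u v)) _ _ => apply (differentiable_pt_acos _ _ f)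
  end; cbv beta.

Ltac differentiable_pt_auto := repeat (first [assumption | differentiable_pt_step]).

Lemma sin_PI_pos A : 0 < A < 1 -> 0 < sin (PI * A).
Proof. intros HA; pose proof PI_RGT_0; apply sin_gt_0; nra. Qed.

Lemma sin_PI_one_minus A : sin (PI * (1 - A)) = sin (PI * A).
Proof. replace (PI * (1 - A)) with (PI - PI * A) by ring; apply sin_PI_x. Qed.

Lemma cos_PI_one_minus A : cos (PI * (1 - A)) = - cos (PI * A).
Proof. replace (PI * (1 - A)) with (PI - PI * A) by ring; apply Rtrigo_facts.cos_pi_minus. Qed.

(* The cosine of the angle between the sides of lengths [r] and [a] of a triangle whose third side has length [b]. *)
Definition cos_law (r a b : R) : R := (r ^ 2 + a ^ 2 - b ^ 2) / (2 * r * a).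

Lemma cos_law_equilateral a : 0 < a -> cos_law a a a = 1 / 2.
Proof. intros Ha; unfold cos_law; field; lra. Qed.

Lemma triangle_closure r a b : 0 < r -> 0 < a -> 0 < b ->
  -1 <= cos_law r a b <= 1 -> -1 <= cos_law r b a <= 1 ->
  a * cos (acos (cos_law r a b)) + b * cos (acos (cos_law r b a)) = r /\
  a * sin (acos (cos_law r a b)) = b * sin (acos (cos_law r b a)).
Proof.
  intros Hr Ha Hb Hp Hq.
  rewrite !cos_acos, !sin_acos by assumption.
  split; [unfold cos_law; field; lra|].
  assert (Hscale : forall t X, 0 < t -> t * sqrt X = sqrt (t ^ 2 * X)).
  { intros t X Ht; rewrite sqrt_mult_alt, sqrt_pow2 by (apply pow2_ge_0 || lra); reflexivity. }
  rewrite !Hscale by assumption.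
  f_equal; unfold cos_law, Rsqr; field; lra.
Qed.

Lemma rotate_closure a b r al be phi :
  a * cos al + b * cos be = r -> a * sin al = b * sin be ->
  a * cos (phi - al) + b * cos (phi + be) = r * cos phi /\
  a * sin (phi - al) + b * sin (phi + be) = r * sin phi.
Proof.
  intros <- Hsin; rewrite cos_minus, cos_plus, sin_minus, sin_plus; split.
  - transitivity (cos phi * (a * cos al + b * cos be) + sin phi * (a * sin al - b * sin be));
      [ring | rewrite Hsin; ring].
  - transitivity (sin phi * (a * cos al + b * cos be) - cos phi * (a * sin al - b * sin be));
      [ring | rewrite Hsin; ring].
Qed.

Lemma polar_left_half_plane s c : 0 < s ->
  s * sqrt (1 + (c / s) ^ 2) * cos (PI - atan (c / s)) = - s /\
  s * sqrt (1 + (c / s) ^ 2) * sin (PI - atan (c / s)) = c.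
Proof.
  intros Hs.
  assert (Hsq : 0 < sqrt (1 + (c / s) ^ 2)) by (apply sqrt_lt_R0; nra).
  rewrite sin_PI_x, Rtrigo_facts.cos_pi_minus, cos_atan, sin_atan.
  replace (c / s)² with ((c / s) ^ 2) by (unfold Rsqr; ring).
  split; field; lra.
Qed.

Lemma K_eq m A : K m A =
  (- cos (PI * A) + 2 * sin (PI * A) * sin (4 * PI * m / 3),
   - sin (PI * A) - 2 * sin (PI * A) * cos (4 * PI * m / 3)).
Proof. unfold K, Cadd, Copp, Cmul, Cexpi; simpl; rewrite cos_neg, sin_neg; f_equal; ring. Qed.

Lemma K_sum_eq0 m n A B :
  sin (PI * A) * cos (4 * PI * m / 3) + sin (PI * B) * cos (4 * PI * n / 3)
    = - (sin (PI * A) + sin (PI * B)) / 2 ->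
  sin (PI * A) * sin (4 * PI * m / 3) + sin (PI * B) * sin (4 * PI * n / 3)
    = (cos (PI * A) + cos (PI * B)) / 2 ->
  Cadd (K m A) (K n B) = C0.
Proof. intros Hre Him; rewrite !K_eq; unfold Cadd, C0; simpl; f_equal; lra. Qed.

(* [target_norm] and [target_arg] are the modulus and argument of [i (e^{i pi A} + e^{i pi B}) / 2]. *)
Definition sin_sum (A B : R) : R := sin (PI * A) + sin (PI * B).
Definition cos_sum (A B : R) : R := cos (PI * A) + cos (PI * B).
Definition target_slope (A B : R) : R := cos_sum A B / sin_sum A B.
Definition target_norm (A B : R) : R := sin_sum A B * sqrt (1 + target_slope A B ^ 2) / 2.
Definition target_arg (A B : R) : R := PI - atan (target_slope A B).
Definition cos_angle_A (A B : R) : R := cos_law (target_norm A B) (sin (PI * A)) (sin (PI * B)).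
Definition cos_angle_B (A B : R) : R := cos_law (target_norm A B) (sin (PI * B)) (sin (PI * A)).
Definition solution_n (A B : R) : R := 3 / (4 * PI) * (target_arg A B + acos (cos_angle_B A B)).
Definition solution_m (A B : R) : R :=
  3 / (4 * PI) * (target_arg A B - acos (cos_angle_A A B) + 2 * PI).

Section Solution.

Variables A B : R.
Hypotheses (HA : 0 < A < 1) (HB : 0 < B < 1).

Lemma sin_sum_pos : 0 < sin_sum A B.
Proof. unfold sin_sum; pose proof (sin_PI_pos A HA); pose proof (sin_PI_pos B HB); lra. Qed.

Lemma target_norm_pos : 0 < target_norm A B.
Proof.
  unfold target_norm; pose proof sin_sum_pos.
  assert (0 < sqrt (1 + target_slope A B ^ 2)) by (apply sqrt_lt_R0; nra).
  nra.
Qed.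

Lemma solution_equation : -1 <= cos_angle_A A B <= 1 -> -1 <= cos_angle_B A B <= 1 ->
  Cadd (K (solution_m A B) A) (K (solution_n A B) B) = C0.
Proof.
  intros Hp Hq; pose proof PI_RGT_0.
  destruct (triangle_closure _ _ _ target_norm_pos (sin_PI_pos A HA) (sin_PI_pos B HB) Hp Hq)
    as [Hcos Hsin].
  destruct (rotate_closure _ _ _ _ _ (target_arg A B) Hcos Hsin) as [Hre Him].
  destruct (polar_left_half_plane _ (cos_sum A B) sin_sum_pos) as [Pre Pim].
  assert (Em : 4 * PI * solution_m A B / 3
               = target_arg A B - acos (cos_angle_A A B) + 2 * PI)
    by (unfold solution_m; field; lra).
  assert (En : 4 * PI * solution_n A B / 3 = target_arg A B + acos (cos_angle_B A B))
    by (unfold solution_n; field; lra).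
  assert (Wre : target_norm A B * cos (target_arg A B) = - sin_sum A B / 2)
    by (unfold target_norm, target_arg, target_slope; lra).
  assert (Wim : target_norm A B * sin (target_arg A B) = cos_sum A B / 2)
    by (unfold target_norm, target_arg, target_slope; lra).
  apply K_sum_eq0; rewrite Em, En, ?(cos_plus _ (2 * PI)), ?(sin_plus _ (2 * PI)), cos_2PI, sin_2PI.
  - transitivity (target_norm A B * cos (target_arg A B)).
    + rewrite <- Hre; unfold cos_angle_A, cos_angle_B; ring.
    + rewrite Wre; unfold sin_sum; ring.
  - transitivity (target_norm A B * sin (target_arg A B)).
    + rewrite <- Him; unfold cos_angle_A, cos_angle_B; ring.
    + rewrite Wim; unfold cos_sum; ring.
Qed.

Lemma differentiable_pt_sin_sum : differentiable_pt sin_sum A B.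
Proof. unfold sin_sum; differentiable_pt_auto. Qed.

Lemma differentiable_pt_target_slope : differentiable_pt target_slope A B.
Proof.
  pose proof sin_sum_pos; unfold target_slope, cos_sum, sin_sum in *.
  differentiable_pt_auto; lra.
Qed.

Lemma differentiable_pt_target_norm : differentiable_pt target_norm A B.
Proof.
  pose proof differentiable_pt_sin_sum; pose proof differentiable_pt_target_slope.
  unfold target_norm; differentiable_pt_auto; [nra | lra].
Qed.

Lemma differentiable_pt_cos_angle_A : differentiable_pt cos_angle_A A B.
Proof.
  pose proof differentiable_pt_target_norm; pose proof target_norm_pos; pose proof (sin_PI_pos A HA).
  unfold cos_angle_A, cos_law; differentiable_pt_auto; nra.
Qed.

Lemma differentiable_pt_cos_angle_B : differentiable_pt cos_angle_B A B.
Proof.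
  pose proof differentiable_pt_target_norm; pose proof target_norm_pos; pose proof (sin_PI_pos B HB).
  unfold cos_angle_B, cos_law; differentiable_pt_auto; nra.
Qed.

Hypotheses (Hp : -1 < cos_angle_A A B < 1) (Hq : -1 < cos_angle_B A B < 1).

Lemma differentiable_pt_solution_n : differentiable_pt solution_n A B.
Proof.
  pose proof differentiable_pt_target_slope; pose proof differentiable_pt_cos_angle_B.
  unfold solution_n, target_arg; differentiable_pt_auto.
Qed.

Lemma differentiable_pt_solution_m : differentiable_pt solution_m A B.
Proof.
  pose proof differentiable_pt_target_slope; pose proof differentiable_pt_cos_angle_A.
  unfold solution_m, target_arg; differentiable_pt_auto.
Qed.

Lemma solution_inK : inK A B (solution_n A B) (solution_m A B).
Proof.
  pose proof PI_RGT_0; pose proof (atan_bound (target_slope A B)).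
  pose proof (acos_bound (cos_angle_A A B)); pose proof (acos_bound (cos_angle_B A B)).
  assert (Hc : 0 < 3 / (4 * PI)) by (apply Rdiv_lt_0_compat; lra).
  assert (Hsum : 2 * (solution_n A B + solution_m A B) / 3 = 1 +
    (2 * PI - 2 * atan (target_slope A B) + acos (cos_angle_B A B) - acos (cos_angle_A A B))
      / (2 * PI)) by (unfold solution_n, solution_m, target_arg; field; lra).
  assert (0 < (2 * PI - 2 * atan (target_slope A B) + acos (cos_angle_B A B)
    - acos (cos_angle_A A B)) / (2 * PI)) by (apply Rdiv_lt_0_compat; lra).
  unfold inK; repeat split; try tauto; try lra.
  - unfold solution_n, target_arg; nra.
  - unfold solution_m, target_arg; nra.
  - apply solution_equation; lra.
Qed.

End Solution.

Lemma acos_half : acos (1 / 2) = PI / 3.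
Proof. rewrite <- cos_PI3; apply acos_cos; pose proof PI_RGT_0; lra. Qed.

Lemma is_derive_acos_half : is_derive acos (1 / 2) (- 2 / sqrt 3).
Proof.
  assert (H : -1 < 1 / 2 < 1) by lra.
  pose proof (derive_pt_acos (1 / 2) H) as E; unfold derive_pt in E.
  destruct (derivable_pt_acos (1 / 2) H) as [l Hl]; simpl in E.
  apply is_derive_Reals; replace (- 2 / sqrt 3) with l; [exact Hl|].
  assert (Hsq : sqrt 3 * sqrt 3 = 3) by (apply sqrt_sqrt; lra).
  assert (0 < sqrt 3) by (apply sqrt_lt_R0; lra).
  rewrite E; replace (1 - (1 / 2)²) with ((sqrt 3 / 2)²) by (unfold Rsqr; nra).
  rewrite sqrt_Rsqr by lra; field; lra.
Qed.

Definition slope_at (A : R) : R := 3 / 8 * (1 + sqrt 3 * (cos (PI * A) / sin (PI * A))).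

Section Complement.

Variable A : R.
Hypothesis HA : 0 < A < 1.

Lemma target_at_complement :
  target_slope A (1 - A) = 0 /\ target_norm A (1 - A) = sin (PI * A) /\
  target_arg A (1 - A) = PI.
Proof.
  pose proof (sin_PI_pos A HA).
  assert (Hk : target_slope A (1 - A) = 0).
  { unfold target_slope, cos_sum, sin_sum; rewrite sin_PI_one_minus, cos_PI_one_minus; field; lra. }
  split; [exact Hk | split].
  - unfold target_norm; rewrite Hk; replace (1 + 0 ^ 2) with 1 by ring; rewrite sqrt_1.
    unfold sin_sum; rewrite sin_PI_one_minus; field.
  - unfold target_arg; rewrite Hk, atan_0; ring.
Qed.

Lemma cos_angles_at_complement :
  cos_angle_A A (1 - A) = 1 / 2 /\ cos_angle_B A (1 - A) = 1 / 2.
Proof.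
  destruct target_at_complement as [_ [Hr _]].
  unfold cos_angle_A, cos_angle_B; rewrite Hr, sin_PI_one_minus.
  split; apply cos_law_equilateral, sin_PI_pos, HA.
Qed.

Lemma solution_at_complement : solution_n A (1 - A) = 1 /\ solution_m A (1 - A) = 2.
Proof.
  destruct target_at_complement as [_ [_ Harg]]; destruct cos_angles_at_complement as [Hp Hq].
  pose proof PI_RGT_0.
  unfold solution_n, solution_m; rewrite Harg, Hp, Hq, acos_half; split; field; lra.
Qed.

Lemma is_derive_target_arg_complement :
  is_derive (fun B => target_arg A B) (1 - A) (PI / 2).
Proof.
  pose proof (sin_PI_pos A HA).
  unfold target_arg, target_slope, sin_sum, cos_sum; auto_derive.
  all: rewrite sin_PI_one_minus, ?cos_PI_one_minus.
  all: replace (cos (PI * A) + - cos (PI * A)) with 0 by ring.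
  - lra.
  - field; lra.
Qed.

Lemma is_derive_cos_angle_A_complement :
  is_derive (fun B => cos_angle_A A B) (1 - A) (3 * PI * cos (PI * A) / (4 * sin (PI * A))).
Proof.
  pose proof (sin_PI_pos A HA).
  unfold cos_angle_A, cos_law, target_norm, target_slope, sin_sum, cos_sum; auto_derive.
  all: rewrite sin_PI_one_minus, ?cos_PI_one_minus.
  all: replace (cos (PI * A) + - cos (PI * A)) with 0 by ring.
  all: replace (1 + 0 * / (sin (PI * A) + sin (PI * A)) * (0 * / (sin (PI * A) + sin (PI * A)) * 1))
         with 1 by (field; lra).
  all: rewrite sqrt_1.
  - repeat split; try lra; nra.
  - field; lra.
Qed.

Lemma is_derive_cos_angle_B_complement :
  is_derive (fun B => cos_angle_B A B) (1 - A) (- (3 * PI * cos (PI * A)) / (4 * sin (PI * A))).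
Proof.
  pose proof (sin_PI_pos A HA).
  unfold cos_angle_B, cos_law, target_norm, target_slope, sin_sum, cos_sum; auto_derive.
  all: rewrite sin_PI_one_minus, ?cos_PI_one_minus.
  all: replace (cos (PI * A) + - cos (PI * A)) with 0 by ring.
  all: replace (1 + 0 * / (sin (PI * A) + sin (PI * A)) * (0 * / (sin (PI * A) + sin (PI * A)) * 1))
         with 1 by (field; lra).
  all: rewrite sqrt_1.
  - repeat split; try lra; nra.
  - field; lra.
Qed.

Lemma is_derive_solution_n_complement : is_derive (fun B => solution_n A B) (1 - A) (slope_at A).
Proof.
  pose proof (sin_PI_pos A HA); pose proof PI_RGT_0.
  assert (Hsq : sqrt 3 * sqrt 3 = 3) by (apply sqrt_sqrt; lra).
  assert (0 < sqrt 3) by (apply sqrt_lt_R0; lra).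
  destruct cos_angles_at_complement as [_ Hq].
  evar (l : R); replace (slope_at A) with l; unfold solution_n.
  - apply (is_derive_scal (fun B => target_arg A B + acos (cos_angle_B A B))).
    apply (is_derive_plus (fun B => target_arg A B) (fun B => acos (cos_angle_B A B))).
    + apply is_derive_target_arg_complement.
    + apply (is_derive_comp acos (fun B => cos_angle_B A B)).
      * rewrite Hq; apply is_derive_acos_half.
      * apply is_derive_cos_angle_B_complement.
  - unfold l, slope_at, scal, plus, mult; simpl; unfold mult; simpl; field_simplify; [|lra..].
    replace (36 * PI * cos (PI * A)) with (12 * PI * cos (PI * A) * (sqrt 3 * sqrt 3))
      by (rewrite Hsq; ring).
    field; lra.
Qed.

Lemma is_derive_solution_m_complement : is_derive (fun B => solution_m A B) (1 - A) (slope_at A).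
Proof.
  pose proof (sin_PI_pos A HA); pose proof PI_RGT_0.
  assert (Hsq : sqrt 3 * sqrt 3 = 3) by (apply sqrt_sqrt; lra).
  assert (0 < sqrt 3) by (apply sqrt_lt_R0; lra).
  destruct cos_angles_at_complement as [Hp _].
  evar (l : R); replace (slope_at A) with l; unfold solution_m.
  - apply (is_derive_scal (fun B => target_arg A B - acos (cos_angle_A A B) + 2 * PI)).
    apply (is_derive_plus (fun B => target_arg A B - acos (cos_angle_A A B)) (fun _ => 2 * PI));
      [|apply is_derive_const].
    apply (is_derive_minus (fun B => target_arg A B) (fun B => acos (cos_angle_A A B))).
    + apply is_derive_target_arg_complement.
    + apply (is_derive_comp acos (fun B => cos_angle_A A B)).
      * rewrite Hp; apply is_derive_acos_half.
      * apply is_derive_cos_angle_A_complement.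
  - unfold l, slope_at, scal, plus, minus, opp, zero, mult; simpl; unfold plus, mult; simpl.
    field_simplify; [|lra..].
    replace (36 * PI * cos (PI * A)) with (12 * PI * cos (PI * A) * (sqrt 3 * sqrt 3))
      by (rewrite Hsq; ring).
    field; lra.
Qed.

End Complement.

Lemma lim0_of_is_derive (g : R -> R) x l c : is_derive g x l -> g x = c ->
  lim0 (fun e => (g (x - e) - c) / e) (- l).
Proof.
  intros Hg <- eps Heps; apply is_derive_Reals in Hg.
  destruct (Hg eps Heps) as [d Hd]; exists d; split; [apply cond_pos|].
  intros e [He0 Hed].
  assert (Hne : - e <> 0) by (intros Z; rewrite <- Rabs_Ropp, Z, Rabs_R0 in He0; lra).
  specialize (Hd (- e) Hne ltac:(rewrite Rabs_Ropp; exact Hed)).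
  replace (x + - e) with (x - e) in Hd by ring.
  replace ((g (x - e) - g x) / e - - l) with (- ((g (x - e) - g x) / - e - l))
    by (field; intros ->; apply Hne; ring).
  rewrite Rabs_Ropp; exact Hd.
Qed.

Lemma solution_domain A0 : 0 < A0 < 1 -> exists delta, 0 < delta /\
  forall A B, Rabs (A - A0) + Rabs (B - (1 - A0)) < delta ->
    0 < A < 1 /\ 0 < B < 1 /\ -1 < cos_angle_A A B < 1 /\ -1 < cos_angle_B A B < 1.
Proof.
  intros HA0; assert (HB0 : 0 < 1 - A0 < 1) by lra.
  destruct (cos_angles_at_complement A0 HA0) as [Hp Hq].
  destruct (differentiable_continuity_pt _ _ _ (differentiable_pt_cos_angle_A _ _ HA0 HB0)
              (mkposreal (1 / 2) ltac:(lra))) as [d1 Hd1].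
  destruct (differentiable_continuity_pt _ _ _ (differentiable_pt_cos_angle_B _ _ HA0 HB0)
              (mkposreal (1 / 2) ltac:(lra))) as [d2 Hd2].
  exists (Rmin (Rmin A0 (1 - A0)) (Rmin d1 d2)); split.
  { repeat apply Rmin_pos; try lra; apply cond_pos. }
  intros A B Hdist.
  pose proof (Rmin_l (Rmin A0 (1 - A0)) (Rmin d1 d2)); pose proof (Rmin_r (Rmin A0 (1 - A0)) (Rmin d1 d2)).
  pose proof (Rmin_l A0 (1 - A0)); pose proof (Rmin_r A0 (1 - A0)).
  pose proof (Rmin_l d1 d2); pose proof (Rmin_r d1 d2).
  pose proof (Rabs_pos (A - A0)); pose proof (Rabs_pos (B - (1 - A0))).
  specialize (Hd1 A B ltac:(lra) ltac:(lra)); specialize (Hd2 A B ltac:(lra) ltac:(lra)).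
  simpl in Hd1, Hd2; rewrite Hp in Hd1; rewrite Hq in Hd2.
  apply Rabs_def2 in Hd1; apply Rabs_def2 in Hd2.
  assert (HA : Rabs (A - A0) < Rmin A0 (1 - A0)) by lra; apply Rabs_def2 in HA.
  assert (HB : Rabs (B - (1 - A0)) < Rmin A0 (1 - A0)) by lra; apply Rabs_def2 in HB.
  repeat split; lra.
Qed.

Theorem mainTheorem5 (A0 B0 : R) :
  0 < A0 < 1 -> 0 < B0 < 1 -> A0 + B0 = 1 ->
  exists (delta : R) (Theta1 Theta2 : R -> R -> R),
    0 < delta /\
    (forall A B : R, Rabs (A - A0) + Rabs (B - B0) < delta ->
       differentiable2_at Theta1 A B /\ differentiable2_at Theta2 A B) /\
    Theta1 A0 B0 = 1 /\ Theta2 A0 B0 = 2 /\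
    (forall A B : R, Rabs (A - A0) + Rabs (B - B0) < delta ->
       Cadd (K (Theta2 A B) A) (K (Theta1 A B) B) = C0 /\
       inK A B (Theta1 A B) (Theta2 A B)) /\
    lim0 (fun e => (Theta1 A0 (B0 - e) - 1) / e)
         (- (3 / 8) * (1 + sqrt 3 * (cos (PI * A0) / sin (PI * A0)))) /\
    lim0 (fun e => (Theta2 A0 (B0 - e) - 2) / e)
         (- (3 / 8) * (1 + sqrt 3 * (cos (PI * A0) / sin (PI * A0)))).
Proof.
  intros HA0 _ HAB; replace B0 with (1 - A0) by lra.
  destruct (solution_domain A0 HA0) as [delta [Hdelta Hdom]].
  destruct (solution_at_complement A0 HA0) as [Hn Hm].
  replace (- (3 / 8) * (1 + sqrt 3 * (cos (PI * A0) / sin (PI * A0)))) with (- slope_at A0)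
    by (unfold slope_at; ring).
  exists delta, solution_n, solution_m.
  split; [exact Hdelta|]; split; [|split; [exact Hn|split; [exact Hm|split; [|split]]]].
  - intros A B Hdist; destruct (Hdom A B Hdist) as [HA [HB [Hp Hq]]].
    split; apply differentiable_pt_differentiable2_at.
    + exact (differentiable_pt_solution_n A B HA HB Hq).
    + exact (differentiable_pt_solution_m A B HA HB Hp).
  - intros A B Hdist; destruct (Hdom A B Hdist) as [HA [HB [Hp Hq]]].
    split; [apply solution_equation; lra | exact (solution_inK A B HA HB Hp Hq)].
  - exact (lim0_of_is_derive _ _ _ _ (is_derive_solution_n_complement A0 HA0) Hn).
  - exact (lim0_of_is_derive _ _ _ _ (is_derive_solution_m_complement A0 HA0) Hm).
Qed.
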